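(* Let $n\ge 2$, $K_n=(V,E)$ the complete graph, and $M_1,M_2$ matchings in $K_n$. If the graph $(V, M_1\triangle M_2)$ has a single non-trivial connected component (a component with more than one node), then $\bm{c}=\chi(M_1)-\chi(M_2)$ is a circuit of the Matching polytope $P_{\mathrm{match}}(n)=\operatorname{conv}\{\chi(M): M\text{ a matching in }K_n\}$, with circuits taken with respect to the linear description $$\bm{x}(E[S])\le (|S|-1)/2 \ \text{for all } S\subseteq V,\ |S| \text{ odd},\ |S|\ge 3;\quad \bm{x}(\delta(v))\le 1\ \text{for all } v\in V;\quad \bm{x}\ge \bm{0}.$$
   Context: $\chi(M)\in\{0,1\}^E$ is the characteristic vector of $M$; $\triangle$ is symmetric difference; $E[S]$ is the set of edges with both endpoints in $S$, $\delta(v)$ the set of edges incident to $v$, $\bm{x}(F)=\sum_{e\in F}x_e$. Circuits: for a polytope $P=\{\bm{x}: B\bm{x}\le \bm{d}\}$ given by a fixed linear system, a nonzero vector $\bm{g}$ is a circuit of $P$ if $\operatorname{supp}(B\bm{g})$ is inclusion-minimal among the sets $\operatorname{supp}(B\bm{y})$ with $\bm{y}\neq\bm{0}$. *)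

From HB Require Import structures.
From mathcomp Require Import all_boot all_order all_algebra.
From mathcomp Require Import reals.
Set Implicit Arguments. Unset Strict Implicit. Unset Printing Implicit Defensive.
Import Order.TTheory GRing.Theory Num.Theory.
Local Open Scope ring_scope.

Definition edge (n : nat) := {e : {set 'I_n} | #|e| == 2%N}.

Definition is_matching n (M : {set edge n}) : Prop :=
  forall e f : edge n, e \in M -> f \in M -> e != f -> [disjoint val e & val f].

Definition chi (R : realType) n (M : {set edge n}) : edge n -> R :=
  fun e => (e \in M)%:R.

Definition symdiff n (A B : {set edge n}) : {set edge n} := (A :\: B) :|: (B :\: A).

Definition adjD n (D : {set edge n}) : rel 'I_n :=
  fun u v => [exists e in D, (u \in val e) && (v \in val e) && (u != v)].

Definition compD n (D : {set edge n}) (x : 'I_n) : {set 'I_n} :=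
  [set y | connect (adjD D) x y].

Definition nontrivial_components n (D : {set edge n}) : {set {set 'I_n}} :=
  [set compD D x | x in [pred x | 1 < #|compD D x|]%N].

(* Row index of the linear system B x <= d:
   inl (inl S) : the odd-set constraint x(E[S]) <= (|S|-1)/2,
   inl (inr v) : the degree constraint x(delta(v)) <= 1,
   inr e       : the nonnegativity constraint -x_e <= 0. *)
Definition row n := (({set 'I_n} + 'I_n) + edge n)%type.

Definition valid_row n (r : row n) : bool :=
  match r with
  | inl (inl A) => odd #|A| && (3 <= #|A|)%N
  | _ => true
  end.

Definition Bx (R : realType) n (x : edge n -> R) (r : row n) : R :=
  match r with
  | inl (inl A) => \sum_(e : edge n | val e \subset A) x e
  | inl (inr v) => \sum_(e : edge n | v \in val e) x e
  | inr e => - x e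
  end.

Definition suppB (R : realType) n (x : edge n -> R) : {set row n} :=
  [set r | valid_row r & Bx x r != 0].

Definition nonzero_vec (R : realType) n (x : edge n -> R) : Prop :=
  exists e, x e != 0.

Definition is_circuit (R : realType) n (g : edge n -> R) : Prop :=
  nonzero_vec g /\
  forall y : edge n -> R, nonzero_vec y ->
    suppB y \subset suppB g -> suppB y = suppB g.

From HB Require Import structures.
From mathcomp Require Import all_boot all_order all_algebra.
From mathcomp Require Import reals.
Import Order.TTheory GRing.Theory Num.Theory.
Local Open Scope ring_scope.

(* Let D = M1 △ M2 and g = χ(M1) - χ(M2), so g = ±1 on D and 0 elsewhere.
   Every vertex meets at most one edge of each matching, so a vertex of
   degree 2 in (V, D) is met by one edge of each sign and its degree row of
   B g vanishes.  If supp(B y) ⊆ supp(B g), the nonnegativity rows force y to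
   vanish off D, and the vanishing degree rows force y_e g_e = y_f g_f for
   adjacent edges e, f of D.  As D has a single nontrivial component, y g is
   a constant t ≠ 0 on D, hence y = t g and supp(B y) = supp(B g). *)

Definition chi_diff (R : realType) {n} (M1 M2 : {set edge n}) : edge n -> R :=
  fun e => chi R M1 e - chi R M2 e.

Lemma matching_eq {n} {M : {set edge n}} {a b v} : is_matching M ->
  a \in M -> b \in M -> v \in val a -> v \in val b -> a = b.
Proof.
move=> hM aM bM va vb; apply/eqP/negPn/negP => ab.
by move: (disjointFr (hM a b aM bM ab) va); rewrite vb.
Qed.

Lemma in_symdiff {n} (A B : {set edge n}) e :
  (e \in symdiff A B) = ((e \in A) != (e \in B)).
Proof. by rewrite !inE; case: (e \in A); case: (e \in B). Qed.

Lemma edge_end {n} (e : edge n) : exists u, u \in val e.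
Proof. by have /cards2P[a [b [_ ->]]] := valP e; exists a; rewrite !inE eqxx. Qed.

Lemma edge_other_end {n} {e : edge n} {u} :
  u \in val e -> exists2 w, w \in val e & u != w.
Proof.
have /cards2P[a [b [ab ->]]] := valP e.
by rewrite !inE => /orP[]/eqP->; [exists b | exists a]; rewrite ?inE ?eqxx ?orbT // eq_sym.
Qed.

Section RowSupport.
Context {R : realType} {n : nat}.
Implicit Types (x y : edge n -> R) (t : R).

Lemma Bx_scale {x y t} : (forall e, y e = t * x e) -> forall r, Bx y r = t * Bx x r.
Proof.
move=> yE [[A|v]|e] /=; last by rewrite yE mulrN.
all: by rewrite mulr_sumr; apply: eq_bigr => e _.
Qed.

Lemma suppB_scale x y t :
  t != 0 -> (forall e, y e = t * x e) -> suppB y = suppB x.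
Proof.
move=> t0 yE; apply/setP => r.
by rewrite !inE (Bx_scale yE r) mulf_eq0 negb_or t0.
Qed.

Lemma suppB_vanish {x y} : suppB y \subset suppB x ->
  forall r, valid_row r -> Bx x r = 0 -> Bx y r = 0.
Proof.
move=> sub r vr Bx0; apply/eqP/negPn/negP => By0.
have /(subsetP sub) : r \in suppB y by rewrite inE vr By0.
by rewrite inE vr Bx0 eqxx.
Qed.

Lemma is_circuit_of_multiples x : nonzero_vec x ->
  (forall y, nonzero_vec y -> suppB y \subset suppB x ->
     exists2 t, t != 0 & forall e, y e = t * x e) ->
  is_circuit x.
Proof. by move=> x0 hy; split=> // y /hy hy' /hy'[t t0]; apply: suppB_scale. Qed.

End RowSupport.

Section Components.
Context {n : nat} {D : {set edge n}}.

Lemma adjD_edge {e u w} :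
  e \in D -> u \in val e -> w \in val e -> u != w -> adjD D u w.
Proof. by move=> eD ue we uw; apply/existsP; exists e; rewrite eD ue we uw. Qed.

Lemma compD_edge_nontrivial {e u} :
  e \in D -> u \in val e -> compD D u \in nontrivial_components D.
Proof.
move=> eD ue; have [w we uw] := edge_other_end ue.
apply/imsetP; exists u => //; rewrite inE; apply/card_gt1P; exists u, w.
by rewrite !inE connect0 (connect1 (adjD_edge eD ue we uw)).
Qed.

Lemma connect_single_component {e f u w} :
  #|nontrivial_components D| = 1%N ->
  e \in D -> f \in D -> u \in val e -> w \in val f -> connect (adjD D) u w.
Proof.
move=> /eqP/cards1P[C hC] eD fD ue wf.
have := compD_edge_nontrivial eD ue; have := compD_edge_nontrivial fD wf.
rewrite hC !inE => /eqP wC /eqP uC.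
have : w \in compD D w by rewrite inE connect0.
by rewrite wC -uC inE.
Qed.

Lemma nontrivial_components_edge :
  nontrivial_components D != set0 -> exists e, e \in D.
Proof.
case/set0Pn => C /imsetP[x]; rewrite inE => /card_gt1P[a [b [ain bin ab]]] _.
case: (pickP (mem D)) => [e eD | noD]; first by exists e.
suff cx : forall z, z \in compD D x -> z = x.
  by move: ab; rewrite (cx a ain) (cx b bin) eqxx.
move=> z; rewrite inE => /connectP[[|c p] /=]; first by move=> _ ->.
by case/andP => /existsP[e /andP[eD _]]; move: (noD e); rewrite /= eD.
Qed.

Lemma connect_edge_const {T : Type} (h : edge n -> T) {e f u w} :
  (forall e f v, e \in D -> f \in D -> v \in val e -> v \in val f -> h e = h f) ->
  connect (adjD D) u w -> e \in D -> u \in val e -> f \in D -> w \in val f ->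
  h e = h f.
Proof.
move=> hloc /connectP[p pth wE] eD ue fD wf.
elim: p u e pth wE eD ue => [|c p IH] u e /=.
  by move=> _ wE eD ue; apply: (hloc _ _ u) => //; rewrite -wE.
case/andP => /existsP[d /andP[dD /andP[/andP[ud cd] _]]] pth wE eD ue.
by rewrite (hloc e d u) //; apply: (IH c).
Qed.

End Components.

Section SymdiffOfMatchings.
Context {R : realType} {n : nat} {M1 M2 : {set edge n}}.
Hypotheses (hM1 : is_matching M1) (hM2 : is_matching M2).
Local Notation D := (symdiff M1 M2).
Local Notation g := (chi_diff R M1 M2).

Lemma in_symdiff_M2 {e} : e \in D -> (e \in M2) = ~~ (e \in M1).
Proof. by rewrite in_symdiff; case: (e \in M1); case: (e \in M2). Qed.

Lemma symdiff_matchings_alternate {e f v} : e \in D -> f \in D -> e != f ->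
  v \in val e -> v \in val f -> (f \in M1) = ~~ (e \in M1).
Proof.
move=> eD fD ef ve vf; have [e1 | e1] /= := boolP (e \in M1).
  by apply/negbTE/negP => f1; move/eqP: ef; apply; apply: matching_eq hM1 e1 f1 ve vf.
have e2 : e \in M2 by rewrite in_symdiff_M2.
rewrite -[f \in M1]negbK -(in_symdiff_M2 fD); apply/negP => f2.
by move/eqP: ef; apply; apply: matching_eq hM2 e2 f2 ve vf.
Qed.

Lemma symdiff_deg_le2 {e f e' v} : e \in D -> f \in D -> e != f ->
  v \in val e -> v \in val f -> e' \in D -> v \in val e' -> (e' == e) || (e' == f).
Proof.
move=> eD fD ef ve vf e'D ve'; apply/negPn/negP => /norP[e'e e'f].
have := symdiff_matchings_alternate fD e'D _ vf ve'.
rewrite eq_sym e'f (symdiff_matchings_alternate eD e'D _ ve ve') ?(eq_sym e) //.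
by rewrite (symdiff_matchings_alternate eD fD ef ve vf); case: (e \in M1) => /(_ isT).
Qed.

Lemma chi_diff_out {e} : e \notin D -> g e = 0.
Proof. by rewrite in_symdiff negbK => /eqP eM12; rewrite /chi_diff /chi eM12 subrr. Qed.

Lemma chi_diff_in {e} : e \in D -> g e = if e \in M1 then 1 else -1.
Proof.
move=> eD; rewrite /chi_diff /chi (in_symdiff_M2 eD).
by case: (e \in M1); rewrite ?subr0 ?sub0r.
Qed.

Lemma chi_diff_neq0 {e} : e \in D -> g e != 0.
Proof. by move/chi_diff_in ->; case: ifP; rewrite ?oppr_eq0 oner_eq0. Qed.

Lemma chi_diff_sqr {e} : e \in D -> g e * g e = 1.
Proof. by move/chi_diff_in ->; case: ifP; rewrite ?mulrNN mulr1. Qed.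

Lemma chi_diff_adj {e f v} : e \in D -> f \in D -> e != f ->
  v \in val e -> v \in val f -> g f = - g e.
Proof.
move=> eD fD ef ve vf.
rewrite !chi_diff_in // (symdiff_matchings_alternate eD fD ef ve vf).
by case: (e \in M1); rewrite ?opprK.
Qed.

Lemma Bx_deg_two (x : edge n -> R) {e f v} : (forall e', e' \notin D -> x e' = 0) ->
  e \in D -> f \in D -> e != f -> v \in val e -> v \in val f ->
  Bx x (inl (inr v)) = x e + x f.
Proof.
move=> x0 eD fD ef ve vf.
rewrite /= (bigD1 e) //= (bigD1 f) /=; last by rewrite vf eq_sym ef.
rewrite big1 ?addr0 // => e' /andP[/andP[ve' e'e] e'f]; apply: x0.
apply/negP => e'D; have := symdiff_deg_le2 eD fD ef ve vf e'D ve'.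
by rewrite (negPf e'e) (negPf e'f).
Qed.

Lemma chi_diff_deg_two {e f v} : e \in D -> f \in D -> e != f ->
  v \in val e -> v \in val f -> Bx g (inl (inr v)) = 0.
Proof.
move=> eD fD ef ve vf.
by rewrite (Bx_deg_two _ (@chi_diff_out) eD fD ef ve vf) (chi_diff_adj eD fD ef ve vf) subrr.
Qed.

Section SupportInside.
Variable y : edge n -> R.
Hypothesis suppy : suppB y \subset suppB g.

Lemma suppB_sub_out {e} : e \notin D -> y e = 0.
Proof.
move=> eD; apply/eqP; rewrite -oppr_eq0; apply/eqP.
by apply: (suppB_vanish suppy (inr e)) => //=; rewrite chi_diff_out ?oppr0.
Qed.

Lemma suppB_sub_adj {e f v} : e \in D -> f \in D ->
  v \in val e -> v \in val f -> y e * g e = y f * g f.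
Proof.
move=> eD fD ve vf; have [-> // | ef] := eqVneq e f.
have : Bx y (inl (inr v)) = 0.
  exact: suppB_vanish suppy _ _ (chi_diff_deg_two eD fD ef ve vf).
rewrite (Bx_deg_two _ (@suppB_sub_out) eD fD ef ve vf) => /eqP.
by rewrite addrC addr_eq0 (chi_diff_adj eD fD ef ve vf) => /eqP->; rewrite mulrNN.
Qed.

Lemma suppB_sub_multiple {e0} : #|nontrivial_components D| = 1%N ->
  e0 \in D -> forall e, y e = (y e0 * g e0) * g e.
Proof.
move=> hD e0D e; have [eD | eD] := boolP (e \in D); last first.
  by rewrite (suppB_sub_out eD) (chi_diff_out eD) mulr0.
have [u ue] := edge_end e0; have [w we] := edge_end e.
have conn := connect_single_component hD e0D eD ue we.
rewrite (connect_edge_const (fun e => y e * g e) _ conn e0D ue eD we).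
  by rewrite -mulrA chi_diff_sqr ?mulr1.
by move=> e1 e2 v; apply: suppB_sub_adj.
Qed.

End SupportInside.

End SymdiffOfMatchings.

Theorem corollary1 (R : realType) (n : nat) (hn : (2 <= n)%N)
    (M1 M2 : {set edge n}) :
  is_matching M1 -> is_matching M2 ->
  #|nontrivial_components (symdiff M1 M2)| = 1%N ->
  is_circuit (fun e => chi R M1 e - chi R M2 e).
Proof.
move=> hM1 hM2 hD; rewrite -/(chi_diff R M1 M2).
have [e0 e0D] : exists e, e \in symdiff M1 M2.
  by apply: nontrivial_components_edge; rewrite -card_gt0 hD.
apply: is_circuit_of_multiples; first by exists e0; apply: chi_diff_neq0.
move=> y [e ye] suppy.
have eD : e \in symdiff M1 M2.
  by apply: contraNT ye => eD; rewrite (suppB_sub_out _ suppy eD).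
exists (y e * chi_diff R M1 M2 e); first by rewrite mulf_neq0 ?chi_diff_neq0.
exact: (suppB_sub_multiple hM1 hM2 _ suppy hD eD).
Qed.
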